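(* Let $M_1$ and $M_2$ be matroids on a finite set $E$. If $M_1$ is connected and $M_2$ has exactly two connected components, $P$ and $Q$, then the mixing graph $G_{M_1,M_2}$ has at most two connected components.
   Context: With $r_1,r_2$ the rank functions of $M_1,M_2$, let $\mathscr{X}=\{A\subseteq E: r_1(A)\ne r_2(A)\}$. The mixing graph $G_{M_1,M_2}$ has vertex set $\mathscr{X}$, and $AB$ is an edge iff either (i) $A\subsetneq B$ or $B\subsetneq A$, or (ii) $A\cap B\notin\mathscr{X}$, $A\cup B\notin\mathscr{X}$, and $|A\triangle B|=2$ ($\triangle$ is symmetric difference). That $M_2$ has exactly two connected components $P,Q$ means $E=P\cup Q$ is a partition with $M_2=M_2|P\oplus M_2|Q$ and both $M_2|P$, $M_2|Q$ connected. *)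

(* Matroids on a finite ground set E = the finType T,
   given by their rank functions. *)
From mathcomp Require Import all_boot.
Set Implicit Arguments. Unset Strict Implicit. Unset Printing Implicit Defensive.

Section Matroids.
Variable T : finType.
Implicit Types (r : {set T} -> nat) (A B X C : {set T}).

Definition matroid_rank r : Prop :=
  [/\ forall A, r A <= #|A|,
      forall A B, A \subset B -> r A <= r B &
      forall A B, r (A :|: B) + r (A :&: B) <= r A + r B].

Definition indep r A : bool := r A == #|A|.

Definition circuit r C : bool :=
  ~~ indep r C && [forall x in C, indep r (C :\ x)].

(* The restriction M|X is connected: any two distinct elements of X lie in
   a common circuit of M|X (i.e. a circuit of M contained in X). *)
Definition connected_on r X : Prop :=
  forall e f, e \in X -> f \in X -> e != f ->
    exists C, [/\ circuit r C, C \subset X, e \in C & f \in C].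

Definition connected_matroid r : Prop := connected_on r setT.

Definition direct_sum_split r P Q : Prop :=
  forall A, r A = r (A :&: P) + r (A :&: Q).

Definition two_components r P Q : Prop :=
  [/\ P != set0, Q != set0, P :&: Q = set0, P :|: Q = setT &
      [/\ direct_sum_split r P Q, connected_on r P & connected_on r Q]].

Definition mix_vertex r1 r2 A : bool := r1 A != r2 A.

Definition symdiff A B : {set T} := (A :\: B) :|: (B :\: A).

Definition mix_edge r1 r2 : rel {set T} := fun A B =>
  [&& mix_vertex r1 r2 A, mix_vertex r1 r2 B &
      [|| A \proper B, B \proper A |
          [&& ~~ mix_vertex r1 r2 (A :&: B), ~~ mix_vertex r1 r2 (A :|: B)
            & #|symdiff A B| == 2]]].

Definition mix_connected r1 r2 A B : bool := connect (mix_edge r1 r2) A B.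

Definition at_most_two_components r1 r2 : Prop :=
  forall A B C, mix_vertex r1 r2 A -> mix_vertex r1 r2 B -> mix_vertex r1 r2 C ->
    [|| mix_connected r1 r2 A B, mix_connected r1 r2 B C | mix_connected r1 r2 A C].

End Matroids.

From mathcomp Require Import all_boot zify.
Set Implicit Arguments. Unset Strict Implicit. Unset Printing Implicit Defensive.

(* Write d(X) = r1(X) - r2(X): the vertices of the mixing graph are the sets
   with d(X) <> 0, and comparable vertices are adjacent.  If d(E) <> 0, then E
   is adjacent to every vertex.  Otherwise connectivity of M1 gives
   r1(E) < r1(P) + r1(Q), while r2(E) = r2(P) + r2(Q), so d(P) > 0 or
   d(Q) > 0, say d(P) > 0.  Since r2 is modular on the pairs X, Y with
   X ∩ P ⊆ Y and Y ∩ Q ⊆ X, d is submodular on them.  A vertex V with d(V) > 0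
   reaches P through V ∩ P or V ∪ P unless both are non-vertices, and then
   submodularity gives d(V ∩ Q) > 0 and d(Q) > 0, so V reaches Q through V ∩ Q.
   A vertex V with d(V) < 0 walks towards P by adding an element p of P \ V or
   removing an element q of V \ P; if both moves hit non-vertices, the exchange
   (V + p) - q is adjacent to V and has d > 0 by submodularity.  So every vertex
   is in the component of P or of Q. *)

Section SetExchange.
Variables (T : finType) (V P : {set T}) (p q : T).

Lemma setI_exchange : V :&: ((p |: V) :\ q) = V :\ q.
Proof. by rewrite setIDA (setIidPl (subsetUr _ _)). Qed.

Lemma setU_exchange : q \in V -> V :|: ((p |: V) :\ q) = p |: V.
Proof.
move=> qV; apply/setP => x; rewrite !inE.
by case: (eqVneq x q) => [->|_]; rewrite ?qV ?orbT //= orbCA orbb.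
Qed.

Lemma symdiff_exchange : p \notin V -> q \in V -> symdiff V ((p |: V) :\ q) = [set p; q].
Proof.
move=> pV qV; apply/setP => x; rewrite !inE.
case: (eqVneq x q) => [->|_]; first by rewrite qV; case: eqP.
by case: (eqVneq x p) => [->|_]; rewrite ?(negPf pV) //; case: (x \in V).
Qed.

Lemma card_symdiff_setU1 : p \in P -> p \notin V ->
  #|symdiff (p |: V) P| < #|symdiff V P|.
Proof.
move=> pP pV; have -> : symdiff (p |: V) P = symdiff V P :\ p.
  by apply/setP => x; rewrite !inE; case: (eqVneq x p) => [->|_] //=; rewrite pP.
by apply/proper_card/properD1; rewrite !inE pP pV.
Qed.

Lemma card_symdiff_setD1 : q \notin P -> q \in V ->
  #|symdiff (V :\ q) P| < #|symdiff V P|.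
Proof.
move=> qP qV; have -> : symdiff (V :\ q) P = symdiff V P :\ q.
  by apply/setP => x; rewrite !inE; case: (eqVneq x q) => [->|_] //=; rewrite (negPf qP).
by apply/proper_card/properD1; rewrite !inE qP qV.
Qed.

End SetExchange.

Lemma partition_compl (T : finType) (P Q : {set T}) :
  P :&: Q = set0 -> P :|: Q = setT -> Q = ~: P.
Proof.
move=> /setP PQ0 /setP PQT; apply/setP => x.
by move: (PQ0 x) (PQT x); rewrite !inE; case: (x \in P); case: (x \in Q).
Qed.

Section DirectSum.
Variables (T : finType) (r : {set T} -> nat) (P Q : {set T}).
Hypothesis r_sum : direct_sum_split r P Q.

Lemma direct_sum_splitC : direct_sum_split r Q P.
Proof. by move=> X; rewrite addnC. Qed.

Lemma direct_sum_modular (X Y : {set T}) : X :&: P \subset Y -> Y :&: Q \subset X ->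
  r (X :&: Y) + r (X :|: Y) = r X + r Y.
Proof.
move=> sXPY sYQX.
have meetP : X :&: Y :&: P = X :&: P by rewrite setIAC; apply/setIidPl.
have joinP : (X :|: Y) :&: P = Y :&: P.
  by rewrite setIUl; apply/setUidPr; rewrite subsetI sXPY subsetIr.
have meetQ : X :&: Y :&: Q = Y :&: Q by rewrite (setIC X) setIAC; apply/setIidPl.
have joinQ : (X :|: Y) :&: Q = X :&: Q.
  by rewrite setIUl; apply/setUidPl; rewrite subsetI sYQX subsetIr.
rewrite (r_sum (X :&: Y)) (r_sum (X :|: Y)) (r_sum X) (r_sum Y).
rewrite meetP joinP meetQ joinQ; lia.
Qed.

End DirectSum.

Section Rank.
Variables (T : finType) (r : {set T} -> nat).
Hypothesis rk : matroid_rank r.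
Implicit Types (A B C P X : {set T}).

Lemma rank_le_card A : r A <= #|A|.
Proof. by case: rk. Qed.

Lemma rank_submod A B : r (A :|: B) + r (A :&: B) <= r A + r B.
Proof. by case: rk. Qed.

Lemma rank_subadd A B : r (A :|: B) <= r A + r B.
Proof. exact: leq_trans (leq_addr _ _) (rank_submod A B). Qed.

Lemma rank_split_le P X : r X <= r (X :&: P) + r (X :&: ~: P).
Proof. by rewrite -{1}(setIT X) -(setUCr P) setIUr rank_subadd. Qed.

Lemma indep_subset A B : A \subset B -> indep r B -> indep r A.
Proof.
move=> sAB /eqP rB; rewrite /indep eqn_leq rank_le_card /=.
have := rank_split_le A B; have := rank_le_card (B :&: ~: A).
rewrite rB -(cardsID A B) setDE (setIidPr sAB); lia.
Qed.

Lemma separator_direct_sum P :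
  r P + r (~: P) <= r setT -> direct_sum_split r P (~: P).
Proof.
move=> sep X; apply/eqP; rewrite eqn_leq rank_split_le /=.
have := rank_submod X P; have := rank_submod (X :|: P) (~: P).
rewrite -setUA setUCr setUT setIUl setICr setU0; lia.
Qed.

Lemma direct_sum_not_circuit P C p q : direct_sum_split r P (~: P) ->
  p \in C :&: P -> q \in C :&: ~: P -> ~~ circuit r C.
Proof.
move=> r_sum /setIP [pC pP] /setIP [qC]; rewrite inE => qP.
apply/negP => /andP [dep /forall_inP minC].
have indepI : indep r (C :&: P).
  apply: indep_subset (minC q qC); apply/subsetP => x /setIP [xC xP].
  by rewrite !inE xC andbT; apply: contraNneq qP => <-.
have indepD : indep r (C :&: ~: P).
  apply: indep_subset (minC p pC); apply/subsetP => x /setIP [xC].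
  by rewrite !inE xC andbT; apply: contraNneq => ->.
move: dep; rewrite /indep (r_sum C) (eqP indepI) (eqP indepD) -setDE.
by rewrite cardsID eqxx.
Qed.

Lemma connected_rank_lt P : connected_matroid r -> P != set0 -> ~: P != set0 ->
  r setT < r P + r (~: P).
Proof.
move=> conn /set0Pn [p pP] /set0Pn [q qP]; rewrite ltnNge; apply/negP => sep.
have npq : p != q by apply: contraTneq qP => <-; rewrite inE pP.
have [C [circC _ pC qC]] := conn p q (in_setT p) (in_setT q) npq.
move: circC; apply/negP.
apply: (direct_sum_not_circuit (p := p) (q := q) (separator_direct_sum sep)).
  by rewrite inE pC pP.
by rewrite inE qC qP.
Qed.

End Rank.

Section MixingGraph.
Variables (T : finType) (r1 r2 : {set T} -> nat).
Local Notation vertex := (mix_vertex r1 r2).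
Local Notation conn := (mix_connected r1 r2).
Implicit Types (A B V X Y : {set T}).

Lemma mix_vertexE A : vertex A = (r1 A < r2 A) || (r2 A < r1 A).
Proof. exact: neq_ltn. Qed.

Lemma mix_vertexN A : ~~ vertex A = (r1 A == r2 A).
Proof. exact: negbK. Qed.

Lemma mix_vertex_lt A : r1 A < r2 A -> vertex A.
Proof. by rewrite mix_vertexE => ->. Qed.

Lemma mix_vertex_gt A : r2 A < r1 A -> vertex A.
Proof. by rewrite mix_vertexE orbC => ->. Qed.

Lemma symdiffC A B : symdiff A B = symdiff B A.
Proof. by rewrite /symdiff setUC. Qed.

Lemma mix_edge_sym : symmetric (mix_edge r1 r2).
Proof. by move=> A B; rewrite /mix_edge setIC setUC symdiffC andbCA orbCA. Qed.

Lemma mix_connected_sym : symmetric conn.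
Proof. exact: sym_connect_sym mix_edge_sym. Qed.

Lemma mix_connected_subset A B : vertex A -> vertex B -> A \subset B -> conn A B.
Proof.
move=> vA vB sAB; have [-> | neAB] := eqVneq A B; first exact: connect0.
by apply: connect1; rewrite /mix_edge vA vB properEneq neAB sAB.
Qed.

Lemma mix_connected_supset A B : vertex A -> vertex B -> B \subset A -> conn A B.
Proof. by move=> vA vB sBA; rewrite mix_connected_sym mix_connected_subset. Qed.

Lemma mix_connected_meet_join A B :
  vertex A -> vertex B -> vertex (A :&: B) || vertex (A :|: B) -> conn A B.
Proof.
move=> vA vB /orP [vI | vU].
  apply: connect_trans (mix_connected_supset vA vI (subsetIl A B)) _.
  exact: mix_connected_subset vI vB (subsetIr A B).
apply: connect_trans (mix_connected_subset vA vU (subsetUl A B)) _.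
exact: mix_connected_supset vU vB (subsetUr A B).
Qed.

Lemma mix_edge_exchange V p q : p \notin V -> q \in V ->
  vertex V -> vertex ((p |: V) :\ q) -> ~~ vertex (V :\ q) -> ~~ vertex (p |: V) ->
  mix_edge r1 r2 V ((p |: V) :\ q).
Proof.
move=> pV qV vV vW flatI flatU; have npq : p != q by apply: contraNneq pV => ->.
rewrite /mix_edge vV vW setI_exchange setU_exchange // symdiff_exchange //.
by rewrite cards2 npq flatI flatU !orbT.
Qed.

Lemma at_most_two_of_hubs X Y :
  (forall V, vertex V -> conn V X \/ conn V Y) -> at_most_two_components r1 r2.
Proof.
move=> hub A B C vA vB vC.
have join U W Z : conn U Z -> conn W Z -> conn U W.
  by move=> cUZ; rewrite mix_connected_sym; apply: connect_trans cUZ.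
by case: (hub A vA) (hub B vB) (hub C vC) => [cA|cA] [cB|cB] [cC|cC];
  rewrite ?(join _ _ _ cA cB) ?(join _ _ _ cB cC) ?(join _ _ _ cA cC) ?orbT.
Qed.

End MixingGraph.

Section ComplementarySides.
Variables (T : finType) (r1 r2 : {set T} -> nat) (P : {set T}).
Hypotheses (rk1 : matroid_rank r1) (r2_sum : direct_sum_split r2 P (~: P)).
Local Notation vertex := (mix_vertex r1 r2).
Local Notation conn := (mix_connected r1 r2).
Implicit Types (V : {set T}).

Lemma pos_vertex_connected_side V : r1 setT = r2 setT -> vertex P ->
  r2 V < r1 V -> conn V P \/ conn V (~: P).
Proof.
move=> eqT vP posV; have vV := mix_vertex_gt posV.
have [meet_join | ] := boolP (vertex (V :&: P) || vertex (V :|: P)).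
  by left; apply: mix_connected_meet_join.
rewrite negb_or !mix_vertexN => /andP [/eqP flatI /eqP flatU]; right.
have posVc : r2 (V :&: ~: P) < r1 (V :&: ~: P).
  by have := r2_sum V; have := rank_split_le rk1 P V; lia.
have posPc : r2 (~: P) < r1 (~: P).
  have sPc : ~: P :&: P \subset V :|: P by rewrite setIC setICr sub0set.
  have := direct_sum_modular r2_sum sPc (subsetIr _ _).
  have := rank_submod rk1 (~: P) (V :|: P).
  have -> : ~: P :&: (V :|: P) = V :&: ~: P.
    by rewrite setIUr (setIC _ P) setICr setU0 setIC.
  rewrite setUCA (setUC (~: P)) setUCr setUT; lia.
have vVc := mix_vertex_gt posVc.
apply: connect_trans (mix_connected_supset vV vVc (subsetIl _ _)) _.
exact: mix_connected_subset vVc (mix_vertex_gt posPc) (subsetIr _ _).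
Qed.

Lemma flat_exchange_gt V p q : p \in P -> q \notin P -> q \in V ->
  r1 V < r2 V -> r1 (V :\ q) = r2 (V :\ q) -> r1 (p |: V) = r2 (p |: V) ->
  r2 ((p |: V) :\ q) < r1 ((p |: V) :\ q).
Proof.
move=> pP qP qV negV flatI flatU; set W := (p |: V) :\ q.
have sVPW : V :&: P \subset W.
  apply/subsetP => x /setIP [xV xP]; rewrite !inE xV orbT andbT.
  by apply: contraNneq qP => <-.
have sWPV : W :&: ~: P \subset V.
  by apply/subsetP => x; rewrite !inE => /andP [/andP [_ /predU1P [-> | //]]]; rewrite pP.
have := direct_sum_modular r2_sum sVPW sWPV; have := rank_submod rk1 V W.
rewrite setI_exchange setU_exchange //; lia.
Qed.

Lemma neg_vertex_connected_pos V : r2 P < r1 P -> r1 V < r2 V ->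
  exists2 W, r2 W < r1 W & conn V W.
Proof.
move=> posP; have vP := mix_vertex_gt posP.
have [n] := ubnP #|symdiff V P|; elim: n V => // n IHn V dist negV.
have vV := mix_vertex_lt negV.
have closer W : vertex W -> conn V W -> #|symdiff W P| < #|symdiff V P| ->
    exists2 U, r2 U < r1 U & conn V U.
  move=> + cVW distW; rewrite mix_vertexE => /orP [negW | posW]; last by exists W.
  have [U posU cWU] := IHn W (leq_trans distW dist) negW.
  by exists U; last exact: connect_trans cVW cWU.
have [comparable | ] := boolP ((V \subset P) || (P \subset V)).
  exists P => //; case/orP: comparable => [sVP | sPV].
    exact: mix_connected_subset.
  exact: mix_connected_supset.
rewrite negb_or => /andP [/subsetPn [q qV qP] /subsetPn [p pP pV]].
have [vVp | flatU] := boolP (vertex (p |: V)).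
  apply: closer vVp (mix_connected_subset vV vVp (subsetUr _ _)) _.
  exact: card_symdiff_setU1.
have [vVq | flatI] := boolP (vertex (V :\ q)).
  apply: closer vVq (mix_connected_supset vV vVq (subsetDl _ _)) _.
  exact: card_symdiff_setD1.
move: (flatI) (flatU); rewrite !mix_vertexN => /eqP eqI /eqP eqU.
have posW := flat_exchange_gt pP qP qV negV eqI eqU.
exists ((p |: V) :\ q) => //; apply: connect1.
exact: mix_edge_exchange (mix_vertex_gt posW) flatI flatU.
Qed.

End ComplementarySides.

Lemma vertex_connected_to_sides (T : finType) (r1 r2 : {set T} -> nat) (P V : {set T}) :
  matroid_rank r1 -> direct_sum_split r2 P (~: P) ->
  r1 setT = r2 setT -> r1 setT < r1 P + r1 (~: P) ->
  mix_vertex r1 r2 V -> mix_connected r1 r2 V P \/ mix_connected r1 r2 V (~: P).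
Proof.
move=> rk1 r2_sum eqT sep vV.
wlog posP : P r2_sum sep / r2 P < r1 P.
  move=> side; have := r2_sum setT; rewrite !setTI => sumT.
  have [posP | posPc] : r2 P < r1 P \/ r2 (~: P) < r1 (~: P) by lia.
    exact: side.
  have := side (~: P); rewrite setCK addnC.
  by case/(_ (direct_sum_splitC r2_sum) sep posPc) => c; [right | left].
have toSide W : r2 W < r1 W -> mix_connected r1 r2 W P \/ mix_connected r1 r2 W (~: P)
  := pos_vertex_connected_side rk1 r2_sum eqT (mix_vertex_gt posP).
move: vV; rewrite mix_vertexE => /orP [negV | posV]; last exact: toSide.
have [W posW cVW] := neg_vertex_connected_pos rk1 r2_sum posP negV.
by case: (toSide W posW) => cW; [left | right]; apply: connect_trans cVW cW.
Qed.

Theorem lemma3p8 (T : finType) (r1 r2 : {set T} -> nat) (P Q : {set T}) :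
  matroid_rank r1 -> matroid_rank r2 ->
  connected_matroid r1 -> two_components r2 P Q ->
  at_most_two_components r1 r2.
Proof.
move=> rk1 _ conn1 [P0 Q0 PQ0 PQT [r2_sum _ _]].
have [eqT | vT] := eqVneq (r1 setT) (r2 setT); last first.
  apply: (at_most_two_of_hubs (X := setT) (Y := setT)) => V vV.
  by left; apply: mix_connected_subset (subsetT V).
move: Q0 r2_sum; rewrite (partition_compl PQ0 PQT) => Pc0 r2_sum.
apply: (at_most_two_of_hubs (X := P) (Y := ~: P)) => V.
by apply: vertex_connected_to_sides => //; apply: connected_rank_lt.
Qed.
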